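(* Let $D\subset\mathbb N$ and let $g_1,g_2:D\to\mathbb R$ satisfy $g_2(n)\ge g_1(n)$ for all $n\in D$, $\lim_{n\to\infty}g_2(n)=-\infty$ and $\lim_{n\to\infty}g_1(n)/n=0$. Let $f:D\to\mathbb R$ be such that there is $n_0\in D$ with $f(n)\ge g_1(n)$ for all $n\in D$, $n\ge n_0$, and suppose $f(n)\le g_2(n)$ for infinitely many $n\in D$. Then $\Omega(f)\ne\emptyset$, the slope set $A_f$ is infinite, and its elements $a_1<a_2<\cdots$ satisfy $\lim_{i\to\infty}a_i=0$.
   Context: Let $D=\{x_0<x_1<x_2<\cdots\}\subset\mathbb R$ be a strictly increasing sequence (finite or infinite) and $f:D\to\mathbb R$. A function $h:D\to\mathbb R$ is convex on $D$ if $h(x)\le \frac{(b-x)h(a)+(x-a)h(b)}{b-a}$ for all $a<x<b$ in $D$. Let $\Omega(f)$ be the set of convex $h:D\to\mathbb R$ with $h\le f$ on $D$. If $\Omega(f)\ne\emptyset$, the lower convex envelope of $f$ is $\breve f(x):=\sup\{h(x):h\in\Omega(f)\}$, a piecewise linear convex function on $D$. Its vertex set $H_f=\{m_0=x_0<m_1<m_2<\cdots\}\subset D$ consists of $x_0$ together with the points of $D$ at which $\breve f=f$ and $\breve f$ changes slope, so that $\breve f$ is linear on $D\cap[m_{i-1},m_i]$ for each $i$. The slope set $A_f=\{a_1<a_2<\cdots\}$ consists of the slopes $a_i=\frac{f(m_i)-f(m_{i-1})}{m_i-m_{i-1}}$ of $\breve f$ on $[m_{i-1},m_i]$; if $D$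 is infinite and $H_f=\{m_0,\dots,m_k\}$ is finite, then $\breve f$ is linear on $D\cap[m_k,\infty)$ and $A_f=\{a_1,\dots,a_k,a_{k+1}\}$, where $a_{k+1}$ is the slope of $\breve f$ on $D\cap[m_k,\infty)$. *)

From Stdlib Require Import Reals Lra Lia.
Open Scope R_scope.

(* D ⊂ ℕ is given as a predicate D : nat -> Prop; functions on D are
   total functions nat -> R whose values outside D are irrelevant. *)

Definition convex_on (D : nat -> Prop) (h : nat -> R) : Prop :=
  forall a x b : nat, D a -> D x -> D b -> (a < x)%nat -> (x < b)%nat ->
    h x <= ((INR b - INR x) * h a + (INR x - INR a) * h b) / (INR b - INR a).

Definition in_Omega (D : nat -> Prop) (f h : nat -> R) : Prop :=
  convex_on D h /\ (forall x, D x -> h x <= f x).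

Definition is_lce (D : nat -> Prop) (f e : nat -> R) : Prop :=
  forall x, D x -> is_lub (fun y => exists h, in_Omega D f h /\ y = h x) (e x).

Definition slope (e : nat -> R) (p q : nat) : R :=
  (e q - e p) / (INR q - INR p).

Definition consecutive (D : nat -> Prop) (p q : nat) : Prop :=
  D p /\ D q /\ (p < q)%nat /\ (forall k, (p < k < q)%nat -> ~ D k).

Definition is_min (D : nat -> Prop) (m : nat) : Prop :=
  D m /\ (forall x, D x -> (m <= x)%nat).

Definition is_vertex (D : nat -> Prop) (f e : nat -> R) (m : nat) : Prop :=
  is_min D m \/
  (D m /\ e m = f m /\
   exists p s, consecutive D p m /\ consecutive D m s /\ slope e p m <> slope e m s).

Definition in_slope_set (D : nat -> Prop) (f e : nat -> R) (a : R) : Prop :=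
  (exists m m', is_vertex D f e m /\ is_vertex D f e m' /\ (m < m')%nat /\
     (forall k, (m < k < m')%nat -> ~ is_vertex D f e k) /\
     a = (f m' - f m) / (INR m' - INR m))
  \/
  (exists mk, is_vertex D f e mk /\ (forall k, (mk < k)%nat -> ~ is_vertex D f e k) /\
     (forall N, exists n, (N <= n)%nat /\ D n) /\
     (forall x, D x -> (mk <= x)%nat -> e x = e mk + a * (INR x - INR mk))).

(* Enumerate D increasingly as x_0 < x_1 < ... and let s_k be the slope of the
   envelope e on [x_k, x_(k+1)].  Convexity of e makes (s_k) nondecreasing, and
   the vertices of e are exactly the points x_k at which (s_k) strictly
   increases ("breakpoints", with k = 0 always counted).  Two growth facts
   control (s_k): f takes arbitrarily negative values far out in D, which forces
   every s_k < 0, and f admits affine minorants of every slope -eps < 0, which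
   forces s_k > -eps eventually.  Hence (s_k) never stabilises, the breakpoints
   form an infinite set b_0 < b_1 < ..., the vertex set is {x_(b_i)}, the slope
   of the envelope between consecutive vertices is s_(b_i), and these slopes
   increase strictly to 0. *)

From Stdlib Require Import Reals Lra Lia Classical ClassicalEpsilon Wf_nat Arith.
Open Scope R_scope.

Lemma least_element (P : nat -> Prop) :
  (exists n, P n) -> exists n, P n /\ forall m, P m -> (n <= m)%nat.
Proof.
  intros Hex.
  destruct (dec_inh_nat_subset_has_unique_least_element P (fun n => classic (P n)) Hex)
    as [n [[Pn Hle] _]].
  eauto.
Qed.

Definition least (P : nat -> Prop) (Hex : exists n, P n) : nat :=
  proj1_sig (constructive_indefinite_description _ (least_element P Hex)).

Lemma least_spec (P : nat -> Prop) (Hex : exists n, P n) :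
  P (least P Hex) /\ forall m, P m -> (least P Hex <= m)%nat.
Proof. unfold least; destruct (constructive_indefinite_description _ _) as [n Hn]; exact Hn. Qed.

Section StrictlyIncreasing.
Variable v : nat -> nat.
Hypothesis v_incr : forall i, (v i < v (S i))%nat.

Lemma incr_lt i j : (i < j)%nat -> (v i < v j)%nat.
Proof. induction 1 as [|j _ IH]; [apply v_incr | specialize (v_incr j); lia]. Qed.

Lemma incr_lt_iff i j : (v i < v j)%nat <-> (i < j)%nat.
Proof.
  split; [|apply incr_lt]. intros Hv.
  destruct (Nat.lt_trichotomy i j) as [Hij|[->|Hji]]; [exact Hij| lia |].
  apply incr_lt in Hji; lia.
Qed.

Lemma incr_le_iff i j : (v i <= v j)%nat <-> (i <= j)%nat.
Proof.
  split; intros H.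
  - destruct (le_lt_dec i j) as [|Hji]; [assumption|]. apply incr_lt in Hji; lia.
  - destruct (Nat.eq_dec i j) as [->|]; [lia|]. apply Nat.lt_le_incl, incr_lt; lia.
Qed.

Lemma incr_inj i j : v i = v j -> i = j.
Proof. intros H. apply Nat.le_antisymm; apply incr_le_iff; lia. Qed.

Lemma incr_ge i : (i <= v i)%nat.
Proof. induction i as [|i IH]; [lia | specialize (v_incr i); lia]. Qed.

Lemma range_consecutive (P : nat -> Prop) (HP : forall m, P m <-> exists i, m = v i) m m' :
  (P m /\ P m' /\ (m < m')%nat /\ (forall k, (m < k < m')%nat -> ~ P k)) <->
  exists i, m = v i /\ m' = v (S i).
Proof.
  split.
  - intros [Hm [Hm' [Hlt Hgap]]].
    apply HP in Hm as [i ->]. apply HP in Hm' as [j ->].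
    rewrite incr_lt_iff in Hlt.
    exists i; split; [reflexivity|].
    destruct (Nat.eq_dec j (S i)) as [->|Hne]; [reflexivity|exfalso].
    apply (Hgap (v (S i))); [split; apply incr_lt; lia | apply HP; eauto].
  - intros [i [-> ->]]. split; [|split; [|split]].
    + apply HP; eauto.
    + apply HP; eauto.
    + apply v_incr.
    + intros k [H1 H2] Hk. apply HP in Hk as [j ->].
      rewrite incr_lt_iff in H1, H2. lia.
Qed.

End StrictlyIncreasing.

Section Enumeration.
Variable P : nat -> Prop.
Hypothesis P_inf : forall N, exists n, (N <= n)%nat /\ P n.

Definition next_in (N : nat) : nat := least (fun n => (N <= n)%nat /\ P n) (P_inf N).

Lemma next_in_spec N :
  ((N <= next_in N)%nat /\ P (next_in N)) /\
  forall m, (N <= m)%nat /\ P m -> (next_in N <= m)%nat.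
Proof. apply (least_spec (fun n => (N <= n)%nat /\ P n)). Qed.

Fixpoint enum (k : nat) : nat :=
  match k with O => next_in 0 | S k => next_in (S (enum k)) end.

Lemma enum_in k : P (enum k).
Proof. destruct k; apply next_in_spec. Qed.

Lemma enum_incr k : (enum k < enum (S k))%nat.
Proof. destruct (next_in_spec (S (enum k))) as [[H _] _]. simpl; lia. Qed.

Lemma enum_first m : P m -> (enum 0 <= m)%nat.
Proof. intros Hm. apply (proj2 (next_in_spec 0)). split; [lia | exact Hm]. Qed.

Lemma enum_next k m : P m -> (enum k < m)%nat -> (enum (S k) <= m)%nat.
Proof. intros Hm Hlt. apply (proj2 (next_in_spec (S (enum k)))). split; [lia | exact Hm]. Qed.

Lemma enum_range m : P m <-> exists k, m = enum k.
Proof.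
  split; [|intros [k ->]; apply enum_in].
  intros Hm.
  assert (Hreach : forall k, (m <= enum k)%nat -> exists j, m = enum j).
  { induction k as [|k IH]; intros Hle.
    - exists 0%nat. pose proof (enum_first m Hm). lia.
    - destruct (le_lt_dec m (enum k)) as [Hk|Hk]; [exact (IH Hk)|].
      exists (S k). pose proof (enum_next k m Hm Hk). lia. }
  apply (Hreach m), (incr_ge enum enum_incr).
Qed.

End Enumeration.

(* The value at x of the chord through (a, ha) and (b, hb); convex_on D h says
   h x <= chord (INR a) (INR b) (INR x) (h a) (h b). *)
Definition chord (a b x ha hb : R) : R := ((b - x) * ha + (x - a) * hb) / (b - a).

Lemma chord_gap a x b ha hx hb : a < x -> x < b ->
  chord a b x ha hb - hx =
  (b - x) * (x - a) / (b - a) * ((hb - hx) / (b - x) - (hx - ha) / (x - a)).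
Proof. intros; unfold chord; field; lra. Qed.

Lemma chord_gap_coef_pos a x b : a < x -> x < b -> 0 < (b - x) * (x - a) / (b - a).
Proof. intros; apply Rdiv_lt_0_compat; [apply Rmult_lt_0_compat|]; lra. Qed.

Lemma slopes_le_of_below_chord a x b ha hx hb : a < x -> x < b ->
  hx <= chord a b x ha hb -> (hx - ha) / (x - a) <= (hb - hx) / (b - x).
Proof.
  intros Hax Hxb Hle.
  pose proof (chord_gap a x b ha hx hb Hax Hxb). pose proof (chord_gap_coef_pos a x b Hax Hxb).
  apply Rnot_lt_le; intros Hlt. nra.
Qed.

Lemma below_chord_of_slopes_lt a x b ha hx hb : a < x -> x < b ->
  (hx - ha) / (x - a) < (hb - hx) / (b - x) -> hx < chord a b x ha hb.
Proof.
  intros Hax Hxb Hlt.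
  pose proof (chord_gap a x b ha hx hb Hax Hxb). pose proof (chord_gap_coef_pos a x b Hax Hxb).
  nra.
Qed.

Lemma chord_le_values p q x u1 u2 v1 v2 : p < x -> x < q -> u1 <= v1 -> u2 <= v2 ->
  chord p q x u1 u2 <= chord p q x v1 v2.
Proof.
  intros. unfold chord, Rdiv. apply Rmult_le_compat_r.
  - left; apply Rinv_0_lt_compat; lra.
  - apply Rplus_le_compat; apply Rmult_le_compat_l; lra.
Qed.

Lemma chord_restrict a b p q x ha hb : a < b -> p < q ->
  chord a b x ha hb = chord p q x (chord a b p ha hb) (chord a b q ha hb).
Proof. intros. unfold chord. field. lra. Qed.

Lemma chord_at_left a b ha hb : a < b -> chord a b a ha hb = ha.
Proof. intros. unfold chord. field. lra. Qed.

Lemma chord_at_right a b ha hb : a < b -> chord a b b ha hb = hb.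
Proof. intros. unfold chord. field. lra. Qed.

Lemma affine_convex (D : nat -> Prop) (C m : R) : convex_on D (fun y => C - m * INR y).
Proof.
  intros a y b _ _ _ Hay Hyb. apply lt_INR in Hay. apply lt_INR in Hyb.
  apply Req_le. field. lra.
Qed.

Section Convexity.
Variables (D : nat -> Prop) (h : nat -> R).
Hypothesis h_convex : convex_on D h.

Lemma convex_nested_chords a p x q b : D a -> D p -> D q -> D b ->
  (a <= p)%nat -> (p < x)%nat -> (x < q)%nat -> (q <= b)%nat ->
  chord (INR p) (INR q) (INR x) (h p) (h q) <= chord (INR a) (INR b) (INR x) (h a) (h b).
Proof.
  intros Ha Hp Hq Hb Hap Hpx Hxq Hqb.
  assert (Hab : INR a < INR b) by (apply lt_INR; lia).
  assert (Hpq : INR p < INR q) by (apply lt_INR; lia).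
  rewrite (chord_restrict _ _ (INR p) (INR q) _ _ _ Hab Hpq).
  apply chord_le_values; try (apply lt_INR; lia).
  - destruct (Nat.eq_dec a p) as [->|]; [rewrite chord_at_left; lra|].
    apply h_convex; auto; lia.
  - destruct (Nat.eq_dec q b) as [->|]; [rewrite chord_at_right; lra|].
    apply h_convex; auto; lia.
Qed.

Lemma convex_slopes_le a x b : D a -> D x -> D b -> (a < x)%nat -> (x < b)%nat ->
  slope h a x <= slope h x b.
Proof.
  intros. unfold slope. apply slopes_le_of_below_chord; try (apply lt_INR; assumption).
  apply h_convex; assumption.
Qed.

End Convexity.

(* If Ω(f) is nonempty, the envelope exists: each sup is bounded by f x. *)
Lemma lce_exists (D : nat -> Prop) (f : nat -> R) :
  (exists h, in_Omega D f h) -> exists e, is_lce D f e.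
Proof.
  intros [h0 Hh0].
  assert (Hsup : forall x, exists l, D x -> is_lub (fun y => exists h, in_Omega D f h /\ y = h x) l).
  { intros x. destruct (classic (D x)) as [Dx|nDx]; [|exists 0; contradiction].
    destruct (completeness (fun y => exists h, in_Omega D f h /\ y = h x)) as [l Hl].
    - exists (f x). intros y [h [[_ Hhf] ->]]. auto.
    - exists (h0 x). eauto.
    - exists l; auto. }
  exists (fun x => proj1_sig (constructive_indefinite_description _ (Hsup x))).
  intros x Dx. destruct (constructive_indefinite_description _ (Hsup x)) as [l Hl]. auto.
Qed.

Section Envelope.
Variables (D : nat -> Prop) (f e : nat -> R).
Hypothesis e_lce : is_lce D f e.

Lemma lce_le_f x : D x -> e x <= f x.
Proof.
  intros Dx. destruct (e_lce x Dx) as [_ Hleast]. apply Hleast.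
  intros y [h [[_ Hhf] ->]]. auto.
Qed.

Lemma lce_ge h x : in_Omega D f h -> D x -> h x <= e x.
Proof. intros Hh Dx. apply (proj1 (e_lce x Dx)). eauto. Qed.

Lemma lce_convex : convex_on D e.
Proof.
  intros a x b Da Dx Db Hax Hxb. destruct (e_lce x Dx) as [_ Hleast]. apply Hleast.
  intros y [h [[Hconv Hhf] ->]]. eapply Rle_trans; [apply (Hconv a x b); auto|].
  apply chord_le_values; try (apply lt_INR; assumption); (apply lce_ge; [split | ]; auto).
Qed.

(* Maximality: e cannot be raised at a point k to a value v <= f k that stays
   below every chord of e over points of D surrounding k. *)
Lemma lce_not_raisable k v : D k -> e k < v -> v <= f k ->
  (forall a b, D a -> D b -> (a < k)%nat -> (k < b)%nat ->
     v <= chord (INR a) (INR b) (INR k) (e a) (e b)) -> False.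
Proof.
  intros Dk Hev Hvf Hchords.
  set (h := fun y => if Nat.eqb y k then v else e y).
  assert (Hh : in_Omega D f h).
  { split.
    - intros a y b Da Dy Db Hay Hyb.
      change (h y <= chord (INR a) (INR b) (INR y) (h a) (h b)). unfold h.
      pose proof (lt_INR _ _ Hay). pose proof (lt_INR _ _ Hyb).
      destruct (Nat.eqb_spec y k), (Nat.eqb_spec a k), (Nat.eqb_spec b k); subst; try lia.
      + apply Hchords; auto.
      + eapply Rle_trans; [apply (lce_convex k y b); auto | apply chord_le_values; lra].
      + eapply Rle_trans; [apply (lce_convex a y k); auto | apply chord_le_values; lra].
      + apply lce_convex; auto.
    - intros y Dy. unfold h. destruct (Nat.eqb_spec y k) as [->|]; auto. apply lce_le_f; auto. }
  pose proof (lce_ge h k Hh Dk) as Hle. unfold h in Hle. rewrite Nat.eqb_refl in Hle. lra.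
Qed.

End Envelope.

Definition breakpoint (s : nat -> R) (k : nat) : Prop :=
  match k with O => True | S j => s j < s (S j) end.

Section NondecreasingSequence.
Variable s : nat -> R.
Hypothesis s_nondecr : forall k, s k <= s (S k).

Lemma nondecr_le i j : (i <= j)%nat -> s i <= s j.
Proof. induction 1 as [|j _ IH]; [lra | specialize (s_nondecr j); lra]. Qed.

Lemma const_without_breakpoints k n : (k <= n)%nat ->
  (forall i, (k < i <= n)%nat -> ~ breakpoint s i) -> s n = s k.
Proof.
  induction 1 as [|n Hkn IH]; intros Hno; [reflexivity|].
  rewrite <- IH by (intros i Hi; apply Hno; lia).
  assert (Hflat : ~ s n < s (S n)) by exact (Hno (S n) ltac:(lia)).
  apply Rnot_lt_le in Hflat. specialize (s_nondecr n). lra.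
Qed.

Lemma breakpoints_unbounded : (forall k, exists n, s k < s n) ->
  forall N, exists n, (N <= n)%nat /\ breakpoint s n.
Proof.
  intros Hclimb N. destruct (Hclimb N) as [n Hlt].
  destruct (le_lt_dec N n) as [HNn|HnN]; [|pose proof (nondecr_le n N ltac:(lia)); lra].
  apply NNPP; intros Hno.
  assert (s n = s N) by (apply const_without_breakpoints; [exact HNn|];
    intros i Hi Hb; apply Hno; exists i; split; [lia | exact Hb]).
  lra.
Qed.

Section Runs.
Hypothesis breaks_inf : forall N, exists n, (N <= n)%nat /\ breakpoint s n.
Local Notation b := (enum (breakpoint s) breaks_inf).

Lemma const_on_run i m : (b i <= m < b (S i))%nat -> s m = s (b i).
Proof.
  intros [Hlo Hhi]. apply const_without_breakpoints; [exact Hlo|].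
  intros j Hj Hb. pose proof (enum_next _ breaks_inf i j Hb ltac:(lia)). lia.
Qed.

Lemma run_values_incr i : s (b i) < s (b (S i)).
Proof.
  pose proof (enum_incr _ breaks_inf i) as Hlt.
  pose proof (enum_in _ breaks_inf (S i)) as Hb.
  destruct (b (S i)) as [|j] eqn:Ebi; [lia|].
  rewrite <- (const_on_run i j) by (rewrite Ebi; lia). exact Hb.
Qed.

End Runs.
End NondecreasingSequence.

Lemma chord_lower_bound (u w : nat -> R) (c : R) (k n : nat) :
  (forall i, u i < u (S i)) -> (k <= n)%nat ->
  (forall i, (k <= i < n)%nat -> c <= (w (S i) - w i) / (u (S i) - u i)) ->
  w k + c * (u n - u k) <= w n.
Proof.
  intros Hu Hkn. induction Hkn as [|n Hkn IH]; intros Hc; [lra|].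
  specialize (IH (fun i Hi => Hc i ltac:(lia))).
  pose proof (Hc n ltac:(lia)) as Hn. pose proof (Hu n).
  assert (c * (u (S n) - u n) <= w (S n) - w n).
  { replace (w (S n) - w n) with ((w (S n) - w n) / (u (S n) - u n) * (u (S n) - u n))
      by (field; lra).
    apply Rmult_le_compat_r; lra. }
  lra.
Qed.

Lemma chord_upper_bound (u w : nat -> R) (c : R) (k n : nat) :
  (forall i, u i < u (S i)) -> (k <= n)%nat ->
  (forall i, (k <= i < n)%nat -> (w (S i) - w i) / (u (S i) - u i) <= c) ->
  w n <= w k + c * (u n - u k).
Proof.
  intros Hu Hkn Hc.
  pose proof (chord_lower_bound u (fun i => - w i) (- c) k n Hu Hkn) as Hneg.
  cbv beta in Hneg.
  enough (- w k + - c * (u n - u k) <= - w n) by lra.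
  apply Hneg. intros i Hi. specialize (Hc i Hi).
  replace ((- w (S i) - - w i) / (u (S i) - u i)) with (- ((w (S i) - w i) / (u (S i) - u i)))
    by (pose proof (Hu i); field; lra).
  lra.
Qed.

Lemma bounded_below_on_prefix (F : nat -> R) (N : nat) :
  exists m, forall n, (n < N)%nat -> m <= F n.
Proof.
  induction N as [|N [m Hm]]; [exists 0; intros; lia|].
  exists (Rmin m (F N)). intros n Hn.
  destruct (Nat.eq_dec n N) as [->|]; [apply Rmin_r|].
  eapply Rle_trans; [apply Rmin_l | apply Hm; lia].
Qed.

Lemma linear_minorant (D : nat -> Prop) (g1 f : nat -> R)
  (Hg1 : forall eps : R, 0 < eps ->
           exists N : nat, forall n, D n -> (N <= n)%nat -> Rabs (g1 n / INR n) < eps)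
  (Hf1 : exists n0, D n0 /\ forall n, D n -> (n0 <= n)%nat -> g1 n <= f n)
  (eps : R) : 0 < eps -> exists C, forall y, D y -> C - eps * INR y <= f y.
Proof.
  intros Heps. destruct (Hg1 eps Heps) as [N HN]. destruct Hf1 as [n0 [_ Hn0]].
  destruct (bounded_below_on_prefix (fun y => f y + eps * INR y) (N + n0 + 1)) as [m Hm].
  exists (Rmin m 0). intros y Dy. pose proof (Rmin_l m 0). pose proof (Rmin_r m 0).
  destruct (le_lt_dec (N + n0 + 1) y) as [Hy|Hy].
  - assert (Hpos : 0 < INR y) by (apply lt_0_INR; lia).
    pose proof (HN y Dy ltac:(lia)) as Hratio. apply Rabs_def2 in Hratio as [_ Hlow].
    assert (g1 y = g1 y / INR y * INR y) by (field; lra).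
    pose proof (Hn0 y Dy ltac:(lia)). nra.
  - specialize (Hm y Hy). simpl in Hm. lra.
Qed.

Lemma unbounded_below (D : nat -> Prop) (g2 f : nat -> R)
  (Hg2 : forall M : R, exists N : nat, forall n, D n -> (N <= n)%nat -> g2 n <= M)
  (Hf2 : forall N : nat, exists n, (N <= n)%nat /\ D n /\ f n <= g2 n) :
  forall M N, exists n, (N <= n)%nat /\ D n /\ f n <= M.
Proof.
  intros M N. destruct (Hg2 M) as [N' HN']. destruct (Hf2 (N + N')%nat) as [n [Hn [Dn Hfn]]].
  exists n. split; [lia|]. split; [exact Dn|]. specialize (HN' n Dn ltac:(lia)). lra.
Qed.

Section EnvelopeOnInfiniteDomain.
Variables (D : nat -> Prop) (f e : nat -> R).
Hypothesis e_lce : is_lce D f e.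
Hypothesis D_inf : forall N, exists n, (N <= n)%nat /\ D n.
Hypothesis f_unbdd : forall M N, exists n, (N <= n)%nat /\ D n /\ f n <= M.
Hypothesis f_minor : forall eps, 0 < eps -> exists C, forall y, D y -> C - eps * INR y <= f y.

Local Notation x := (enum D D_inf).

Lemma INR_x_incr k : INR (x k) < INR (x (S k)).
Proof. apply lt_INR, enum_incr. Qed.

Lemma D_below_succ j a : D a -> (a < x (S j))%nat -> (a <= x j)%nat.
Proof.
  intros Da Ha. apply (enum_range D D_inf) in Da as [ia ->].
  rewrite (incr_lt_iff x (enum_incr D D_inf)) in Ha.
  apply (incr_le_iff x (enum_incr D D_inf)). lia.
Qed.

Definition grid_slope (k : nat) : R := slope e (x k) (x (S k)).

Lemma grid_slope_nondecr k : grid_slope k <= grid_slope (S k).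
Proof.
  apply (convex_slopes_le D e (lce_convex D f e e_lce)); try apply (enum_in D D_inf); apply enum_incr.
Qed.

Lemma lce_touches k : breakpoint grid_slope k -> e (x k) = f (x k).
Proof.
  intros Hbreak. apply Rle_antisym; [apply (lce_le_f D f e e_lce), (enum_in D D_inf)|].
  apply Rnot_lt_le; intros Hlow.
  destruct k as [|j].
  - apply (lce_not_raisable D f e e_lce (x 0) (f (x 0))); [apply (enum_in D D_inf) | lra | lra |].
    intros a b Da _ Ha. pose proof (enum_first D D_inf a Da). lia.
  - set (C := chord (INR (x j)) (INR (x (S (S j)))) (INR (x (S j))) (e (x j)) (e (x (S (S j))))).
    assert (HC : e (x (S j)) < C)
      by (apply below_chord_of_slopes_lt; [apply INR_x_incr | apply INR_x_incr | exact Hbreak]).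
    apply (lce_not_raisable D f e e_lce (x (S j)) (Rmin (f (x (S j))) C));
      [apply (enum_in D D_inf) | apply Rmin_glb_lt; assumption | apply Rmin_l |].
    intros a b Da Db Ha Hb. eapply Rle_trans; [apply Rmin_r|].
    apply (convex_nested_chords D e (lce_convex D f e e_lce)); try apply (enum_in D D_inf); auto.
    + apply D_below_succ; assumption.
    + apply enum_incr.
    + apply enum_incr.
    + apply enum_next; assumption.
Qed.

Lemma vertex_iff_breakpoint m : is_vertex D f e m <-> exists k, m = x k /\ breakpoint grid_slope k.
Proof.
  pose proof (range_consecutive x (enum_incr D D_inf) D (enum_range D D_inf)) as Hcons.
  split.
  - intros [[Dm Hmin] | [Dm [_ [p [q [Hp [Hq Hne]]]]]]].
    + exists 0%nat. split; [|exact I].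
      pose proof (Hmin _ (enum_in D D_inf 0)). pose proof (enum_first D D_inf m Dm). lia.
    + apply Hcons in Hp as [k [-> ->]]. apply Hcons in Hq as [k' [Hk' ->]].
      apply (incr_inj x (enum_incr D D_inf)) in Hk'. subst k'.
      exists (S k). split; [reflexivity|].
      destruct (Rle_lt_or_eq_dec _ _ (grid_slope_nondecr k)) as [Hlt|Heq];
        [exact Hlt | contradiction].
  - intros [k [-> Hk]]. destruct k as [|j].
    + left. split; [apply (enum_in D D_inf) | apply enum_first].
    + right. split; [apply (enum_in D D_inf)|]. split; [apply lce_touches; exact Hk|].
      exists (x j), (x (S (S j))).
      split; [apply Hcons; eauto|]. split; [apply Hcons; eauto|].
      apply Rlt_not_eq. exact Hk.
Qed.

Lemma chord_of_constant_run k n c : (k < n)%nat ->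
  (forall i, (k <= i < n)%nat -> grid_slope i = c) -> slope e (x k) (x n) = c.
Proof.
  intros Hkn Hc.
  assert (Hslope : forall i, (k <= i < n)%nat ->
            (e (x (S i)) - e (x i)) / (INR (x (S i)) - INR (x i)) = c) by exact Hc.
  pose proof (chord_lower_bound (fun i => INR (x i)) (fun i => e (x i)) c k n INR_x_incr
                ltac:(lia) ltac:(intros i Hi; cbv beta; rewrite (Hslope i Hi); lra)).
  pose proof (chord_upper_bound (fun i => INR (x i)) (fun i => e (x i)) c k n INR_x_incr
                ltac:(lia) ltac:(intros i Hi; cbv beta; rewrite (Hslope i Hi); lra)).
  cbv beta in *.
  assert (INR (x k) < INR (x n)) by (apply lt_INR, (incr_lt x (enum_incr D D_inf)); exact Hkn).
  unfold slope. replace (e (x n)) with (e (x k) + c * (INR (x n) - INR (x k))) by lra.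
  field. lra.
Qed.

(* Since f is unbounded below far out in D, every slope of e is negative. *)
Lemma grid_slope_neg k : grid_slope k < 0.
Proof.
  apply Rnot_le_lt; intros Hge.
  destruct (f_unbdd (e (x k) - 1) (x k)) as [n [Hn [Dn Hfn]]].
  destruct (proj1 (enum_range D D_inf n) Dn) as [j ->].
  rewrite (incr_le_iff x (enum_incr D D_inf)) in Hn.
  assert (Hrise : e (x k) + 0 * (INR (x j) - INR (x k)) <= e (x j)).
  { apply (chord_lower_bound (fun i => INR (x i)) (fun i => e (x i)) 0 k j INR_x_incr Hn).
    intros i Hi. pose proof (nondecr_le grid_slope grid_slope_nondecr k i ltac:(lia)).
    unfold grid_slope, slope in *. lra. }
  pose proof (lce_le_f D f e e_lce (x j) Dn). lra.
Qed.

(* Since f has affine minorants of every slope -eps < 0, so does e, hence the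
   slopes of e eventually exceed -eps. *)
Lemma grid_slope_to_zero eps : 0 < eps -> exists K, forall k, (K <= k)%nat -> - eps < grid_slope k.
Proof.
  intros Heps. destruct (f_minor (eps / 2) ltac:(lra)) as [C HC].
  assert (Hom : in_Omega D f (fun y => C - eps / 2 * INR y)) by (split; [apply affine_convex | exact HC]).
  destruct (INR_archimed (eps / 2) (e (x 0) + eps * INR (x 0) - C) ltac:(lra)) as [K HK].
  exists K. intros k Hk. apply Rnot_le_lt; intros Hle.
  assert (Hfall : e (x k) <= e (x 0) + - eps * (INR (x k) - INR (x 0))).
  { apply (chord_upper_bound (fun i => INR (x i)) (fun i => e (x i)) (- eps) 0 k INR_x_incr
             ltac:(lia)).
    intros i Hi. pose proof (nondecr_le grid_slope grid_slope_nondecr i k ltac:(lia)).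
    unfold grid_slope, slope in *. lra. }
  pose proof (lce_ge D f e e_lce _ (x k) Hom (enum_in D D_inf k)) as Habove. cbv beta in Habove.
  assert (INR K <= INR (x k)) by (apply le_INR; pose proof (incr_ge x (enum_incr D D_inf) k); lia).
  assert (0 <= eps / 2 * (INR (x k) - INR K)) by (apply Rmult_le_pos; lra).
  lra.
Qed.

Lemma breakpoints_infinite : forall N, exists n, (N <= n)%nat /\ breakpoint grid_slope n.
Proof.
  apply (breakpoints_unbounded grid_slope grid_slope_nondecr).
  intros k. pose proof (grid_slope_neg k) as Hneg.
  destruct (grid_slope_to_zero (- grid_slope k) ltac:(lra)) as [K HK].
  exists K. specialize (HK K (le_n K)). lra.
Qed.

Local Notation b := (enum (breakpoint grid_slope) breakpoints_infinite).

Definition vertex (i : nat) : nat := x (b i).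
Definition vertex_slope (i : nat) : R := grid_slope (b i).

Lemma vertex_incr i : (vertex i < vertex (S i))%nat.
Proof. apply (incr_lt x (enum_incr D D_inf)), enum_incr. Qed.

Lemma vertex_range m : is_vertex D f e m <-> exists i, m = vertex i.
Proof.
  rewrite vertex_iff_breakpoint. split.
  - intros [k [-> Hk]]. apply (enum_range _ breakpoints_infinite) in Hk as [i ->]. exists i. reflexivity.
  - intros [i ->]. exists (b i). split; [reflexivity | apply enum_in].
Qed.

(* Between consecutive vertices f = e, and the chord of f has slope vertex_slope i. *)
Lemma vertex_chord i : slope f (vertex i) (vertex (S i)) = vertex_slope i.
Proof.
  unfold vertex, slope.
  rewrite <- !lce_touches by apply enum_in.
  apply chord_of_constant_run; [apply enum_incr|].
  intros m Hm. apply (const_on_run grid_slope grid_slope_nondecr). exact Hm.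
Qed.

Lemma vertex_slope_incr i : vertex_slope i < vertex_slope (S i).
Proof. apply (run_values_incr grid_slope grid_slope_nondecr). Qed.

Lemma slope_set_iff y : in_slope_set D f e y <-> exists i, y = vertex_slope i.
Proof.
  pose proof (range_consecutive vertex vertex_incr _ vertex_range) as Hcons.
  split.
  - intros [[m [m' [Hm [Hm' [Hlt [Hgap ->]]]]]] | [mk [Hmk [Hlast _]]]].
    + destruct (proj1 (Hcons m m') (conj Hm (conj Hm' (conj Hlt Hgap)))) as [i [-> ->]].
      exists i. apply vertex_chord.
    + exfalso. apply vertex_range in Hmk as [i ->].
      apply (Hlast (vertex (S i))); [apply vertex_incr | apply vertex_range; eauto].
  - intros [i ->]. left.
    destruct (proj2 (Hcons (vertex i) (vertex (S i))) (ex_intro _ i (conj eq_refl eq_refl)))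
      as [Hm [Hm' [Hlt Hgap]]].
    exists (vertex i), (vertex (S i)). repeat (split; [assumption|]).
    symmetry. apply vertex_chord.
Qed.

Lemma vertex_slope_to_zero : Un_cv vertex_slope 0.
Proof.
  intros eps Heps. destruct (grid_slope_to_zero eps Heps) as [K HK].
  exists K. intros n Hn. unfold R_dist, vertex_slope. rewrite Rminus_0_r.
  pose proof (grid_slope_neg (b n)).
  pose proof (HK (b n) ltac:(pose proof (incr_ge _ (enum_incr _ breakpoints_infinite) n); lia)).
  rewrite Rabs_left; lra.
Qed.

End EnvelopeOnInfiniteDomain.

Theorem lemma5 (D : nat -> Prop) (g1 g2 f : nat -> R)
  (Hg12 : forall n, D n -> g1 n <= g2 n)
  (Hg2 : forall M : R, exists N : nat, forall n, D n -> (N <= n)%nat -> g2 n <= M)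
  (Hg1 : forall eps : R, 0 < eps ->
           exists N : nat, forall n, D n -> (N <= n)%nat -> Rabs (g1 n / INR n) < eps)
  (Hf1 : exists n0, D n0 /\ forall n, D n -> (n0 <= n)%nat -> g1 n <= f n)
  (Hf2 : forall N : nat, exists n, (N <= n)%nat /\ D n /\ f n <= g2 n) :
  (exists h, in_Omega D f h) /\
  (exists e, is_lce D f e) /\
  (forall e, is_lce D f e ->
     exists a : nat -> R,
       (forall i, a i < a (S i)) /\
       (forall y, in_slope_set D f e y <-> exists i, y = a i) /\
       Un_cv a 0).
Proof.
  pose proof (linear_minorant D g1 f Hg1 Hf1) as f_minor.
  pose proof (unbounded_below D g2 f Hg2 Hf2) as f_unbdd.
  assert (D_inf : forall N, exists n, (N <= n)%nat /\ D n).
  { intros N. destruct (f_unbdd 0 N) as [n [Hn [Dn _]]]. eauto. }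
  assert (Omega_nonempty : exists h, in_Omega D f h).
  { destruct (f_minor 1 Rlt_0_1) as [C HC].
    exists (fun y => C - 1 * INR y). split; [apply affine_convex | exact HC]. }
  split; [exact Omega_nonempty|]. split; [exact (lce_exists D f Omega_nonempty)|].
  intros e He.
  exists (vertex_slope D f e He D_inf f_unbdd f_minor). split; [|split].
  - apply vertex_slope_incr.
  - apply slope_set_iff.
  - apply vertex_slope_to_zero.
Qed.
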